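(* Let $F\subseteq E(H)$ with $|F|=\ell$, and let $X\subseteq V$ be a cut with $S_i\subseteq X$ and $T_i\subseteq V\setminus X$ for some $i\in[q]$. If $X$ is intact with respect to $F$, then $\tilde x(\delta_G(X)\setminus F)\ge 3/4$.
   Context: Standing setup. $G=(V,E)$ is an undirected graph with $n=|V|$, demand-pairs $(S_i,T_i)$, $i\in[q]$, of subsets of $V$. $\ell\ge1$ is an integer and $E_\ell\subseteq E$ an edge set such that in $(V,E_\ell)$ every $(S_i,T_i)$ is $\ell$-edge-connected. $x:E\to[0,1]$ satisfies $x_e=1$ for $e\in E_\ell$ and $\sum_{e\in\delta_G(X)}x_e\ge \ell+1$ for every $i\in[q]$ and every $X$ with $T_i\subseteq X\subseteq V\setminus S_i$ (here $\delta_G(X)$ is the set of edges of $G$ with exactly one endpoint in $X$, and $x(F)=\sum_{e\in F}x_e$). $\beta\ge1$ is a real. $\mathsf{LARGE}=\{e: x_e\ge 1/(4\ell\beta)\}$, $\mathsf{SMALL}=E\setminus\mathsf{LARGE}$, and $H=(V,\mathsf{LARGE})$. Capacities: $\tilde x_e=1/(4\ell\beta)$ if $e\in\mathsf{LARGE}$; $\tilde x_e=0$ if $x_e<\frac{1}{2n^2}\cdot\frac1{4\ell\beta}$; $\tilde x_e=x_e$ otherwise. $\mathbb Q^F$ is the set of vertex sets of connected components of $(V,E(H)\setminus F)$. A cut $X\subseteq V$ is shattered (w.r.t. $F$) if some $Q\in\mathbb Q^F$ satisfies $Q\cap X\neq\emptyset$ and $Q\cap(V\setminus X)\neq\emptyset$;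 otherwise $X$ is intact. *)

From mathcomp Require Import all_boot all_order all_algebra.
Set Implicit Arguments. Unset Strict Implicit. Unset Printing Implicit Defensive.
Import Order.TTheory GRing.Theory Num.Theory.
Local Open Scope ring_scope.

(* A simple undirected graph on a finite vertex type V is given by its edge
   set E : {set {set V}}, each edge being a 2-element vertex set. *)
Definition simple_edges (V : finType) (E : {set {set V}}) : Prop :=
  forall e, e \in E -> #|e| = 2%N.

Definition delta (V : finType) (F : {set {set V}}) (X : {set V}) : {set {set V}} :=
  [set e in F | #|e :&: X| == 1%N].

Definition xsum (R : numDomainType) (V : finType) (x : {set V} -> R)
  (F : {set {set V}}) : R := \sum_(e in F) x e.

Definition l_edge_connected (V : finType) (El : {set {set V}}) (l : nat)
  (S T : {set V}) : Prop :=
  forall X : {set V}, T \subset X -> X \subset ~: S -> (l <= #|delta El X|)%N.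

Definition threshold (R : realFieldType) (l : nat) (beta : R) : R :=
  1 / (4 * l%:R * beta).

Definition LARGE (R : realFieldType) (V : finType) (E : {set {set V}})
  (x : {set V} -> R) (l : nat) (beta : R) : {set {set V}} :=
  [set e in E | threshold l beta <= x e].

Definition xtilde (R : realFieldType) (V : finType) (x : {set V} -> R)
  (l : nat) (beta : R) (e : {set V}) : R :=
  if threshold l beta <= x e then threshold l beta
  else if x e < 1 / (2 * (#|V|%:R) ^+ 2) * threshold l beta then 0
  else x e.

Definition adj (V : finType) (Ed : {set {set V}}) : rel V :=
  fun u v => [set u; v] \in Ed.

Definition components (V : finType) (EH F : {set {set V}}) : {set {set V}} :=
  [set [set v | connect (adj (EH :\: F)) u v] | u : V].

Definition shattered (V : finType) (EH F : {set {set V}}) (X : {set V}) : bool :=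
  [exists Q in components EH F, (Q :&: X != set0) && (Q :&: ~: X != set0)].

Definition intact (V : finType) (EH F : {set {set V}}) (X : {set V}) : bool :=
  ~~ shattered EH F X.

From mathcomp Require Import all_boot all_order all_algebra.
From mathcomp Require Import zify ring lra.
Set Implicit Arguments. Unset Strict Implicit. Unset Printing Implicit Defensive.
Import Order.TTheory GRing.Theory Num.Theory.
Local Open Scope ring_scope.

(* Applying the cut condition of (S_i, T_i) to the complement of X gives
   x(delta X) >= l + 1; the l edges of F carry at most l of it, so
   x(delta X \ F) >= 1.  Since X is intact, no edge of delta X \ F lies in
   H - F, i.e. all of them are small, and passing from x to x~ loses at most
   1/(8 l beta n^2) on each of the at most n^2 edges, i.e. at most 1/8 in
   total. *)

Lemma delta_setC (V : finType) (E : {set {set V}}) (X : {set V}) :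
  simple_edges E -> delta E (~: X) = delta E X.
Proof.
move=> hE; apply/setP=> e; rewrite !inE.
case eE: (e \in E) => //=.
have := cardsID X e; rewrite (hE e) // -setDE => h.
by apply/eqP/eqP; lia.
Qed.

Lemma card_simple_edges (V : finType) (D : {set {set V}}) :
  simple_edges D -> (#|D| <= #|V| ^ 2)%N.
Proof.
move=> hD.
have : (#|D| <= #|[set A : {set V} | #|A| == 2%N]|)%N.
  by apply: subset_leq_card; apply/subsetP=> e /hD he; rewrite inE he.
rewrite card_draws bin2 => h; apply: leq_trans h _.
have : (#|V|.-1 <= #|V|)%N by apply: leq_pred.
move: #|V|.-1 => m hm; rewrite leq_half_double -muln2; nia.
Qed.

Lemma crossing_edge_pair (V : finType) (e X : {set V}) :
  #|e| = 2%N -> #|e :&: X| = 1%N ->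
  exists u v, [/\ e = [set u; v], u \in X & v \notin X].
Proof.
move=> e2 eX.
have [u hu] := cards1P (introT eqP eX).
have [v hv] : exists v, e :\: X = [set v].
  by apply/cards1P; have := cardsID X e; rewrite e2 eX; lia.
have /setIP[ue uX] : u \in e :&: X by rewrite hu set11.
have /setDP[ve vX] : v \in e :\: X by rewrite hv set11.
have uv : u != v by apply: contraNneq vX => <-.
exists u, v; split=> //; apply/eqP; rewrite eq_sym eqEcard cards2 uv e2 leqnn.
by rewrite andbT; apply/subsetP=> w; rewrite !inE => /orP[]/eqP->.
Qed.

Lemma crossing_edge_shattered (V : finType) (EH F : {set {set V}})
  (X e : {set V}) :
  #|e| = 2%N -> e \in EH :\: F -> #|e :&: X| = 1%N -> shattered EH F X.
Proof.
move=> e2 eHF eX; have [u [v [euv uX vX]]] := crossing_edge_pair e2 eX.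
rewrite euv in eHF.
apply/existsP; exists [set w | connect (adj (EH :\: F)) u w].
apply/and3P; split; first by apply/imsetP; exists u.
  by apply/set0Pn; exists u; rewrite !inE connect0.
by apply/set0Pn; exists v; rewrite !inE vX andbT; apply: connect1.
Qed.

Lemma xsum_setD_ge (R : numDomainType) (V : finType) (x : {set V} -> R)
  (A F : {set {set V}}) :
  (forall e, e \in A -> x e <= 1) ->
  xsum x A - #|F|%:R <= xsum x (A :\: F).
Proof.
move=> hx; rewrite /xsum (big_setID F) /= lerBlDl lerD2r.
apply: (@le_trans _ _ (\sum_(e in A :&: F) (1 : R))).
  by apply: ler_sum => e /setIP[/hx].
by rewrite sumr_const ler_nat subset_leq_card ?subsetIr.
Qed.

Section Capacities.

Variables (R : realFieldType) (V : finType) (x : {set V} -> R).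
Variables (l : nat) (beta : R).
Hypotheses (l_ge1 : (1 <= l)%N) (beta_ge1 : 1 <= beta).

Let thr := threshold l beta.
Let tiny := 1 / (2 * (#|V|%:R) ^+ 2) * thr.

Lemma threshold_bounds : 0 < thr <= 1 / 4.
Proof.
have hl : 1 <= l%:R :> R by rewrite ler1n.
have hp : 4 <= 4 * l%:R * beta :> R by move: beta_ge1; nra.
rewrite /thr /threshold !mul1r invr_gt0 lef_pV2 ?posrE; lra.
Qed.

Lemma tiny_ge0 : 0 <= tiny.
Proof.
have /andP[thr_gt0 _] := threshold_bounds.
by apply: mulr_ge0 (ltW thr_gt0); rewrite mul1r invr_ge0 mulr_ge0 ?exprn_ge0.
Qed.

Lemma xtilde_small_ge e :
  0 <= x e -> x e < thr -> x e - tiny <= xtilde x l beta e.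
Proof.
have := tiny_ge0; rewrite /xtilde -/thr -/tiny => tiny_ge0 x_ge0 x_small; rewrite (leNgt thr) x_small /=.
case: ifP; lra.
Qed.

Lemma xtilde_small_sum_ge (D : {set {set V}}) :
  simple_edges D -> (forall e, e \in D -> 0 <= x e < thr) ->
  xsum x D - 1 / 8 <= xsum (xtilde x l beta) D.
Proof.
move=> hD hsmall; have /andP[thr_gt0 thr_le] := threshold_bounds.
apply: (@le_trans _ _ (xsum x D - #|D|%:R * tiny)).
  rewrite lerD2l lerN2; have [V0 | Vpos] := posnP #|V|.
    by rewrite /tiny V0 expr0n /= !(mulr0, invr0, mul0r); lra.
  apply: (@le_trans _ _ ((#|V|%:R) ^+ 2 * tiny)).
    rewrite ler_wpM2r -?natrX ?ler_nat ?card_simple_edges //.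
    exact: tiny_ge0.
  have -> : (#|V|%:R : R) ^+ 2 * tiny = thr / 2.
    by rewrite /tiny; field; rewrite pnatr_eq0 -lt0n.
  lra.
rewrite /xsum mulr_natl -sumr_const -sumrB; apply: ler_sum => e /hsmall /andP[].
exact: xtilde_small_ge.
Qed.

End Capacities.

Theorem lemma5p7 (R : realFieldType) (V : finType) (E El : {set {set V}})
  (q : nat) (S T : 'I_q -> {set V}) (l : nat) (x : {set V} -> R) (beta : R)
  (F : {set {set V}}) (X : {set V}) (i : 'I_q) :
  simple_edges E ->
  (1 <= l)%N ->
  El \subset E ->
  (forall j : 'I_q, l_edge_connected El l (S j) (T j)) ->
  (forall e, e \in E -> 0 <= x e <= 1) ->
  (forall e, e \in El -> x e = 1) ->
  (forall (j : 'I_q) (Y : {set V}), T j \subset Y -> Y \subset ~: S j ->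
      l%:R + 1 <= xsum x (delta E Y)) ->
  1 <= beta ->
  F \subset LARGE E x l beta ->
  #|F| = l ->
  S i \subset X -> T i \subset ~: X ->
  intact (LARGE E x l beta) F X ->
  3 / 4 <= xsum (xtilde x l beta) (delta E X :\: F).
Proof.
move=> hE hl _ _ hx _ hcut hb _ hFl hS hT hint.
set D := delta E X :\: F.
have DE e : e \in D -> e \in E by case/setDP=> /setIdP[].
have cut_X : l%:R + 1 <= xsum x (delta E X).
  by rewrite -delta_setC //; apply: (hcut i); rewrite ?setCS.
have xD_ge1 : 1 <= xsum x D.
  have x_le1 e : e \in delta E X -> x e <= 1.
    by case/setIdP=> eE _; case/andP: (hx e eE).
  by have := xsum_setD_ge F x_le1; rewrite hFl; lra.
have D_small e : e \in D -> 0 <= x e < threshold l beta.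
  move=> eD; have /andP[-> _] := hx e (DE e eD); rewrite ltNge.
  apply: contra hint => x_large.
  case/setDP: eD => /setIdP[eE /eqP eX] eF.
  by apply: (crossing_edge_shattered (hE e eE) _ eX); rewrite !inE eF eE.
have := xtilde_small_sum_ge hl hb (fun e eD => hE e (DE e eD)) D_small.
lra.
Qed.
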